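(* Let $\mathcal{A}$ and $\mathcal{U}$ be Banach algebras, $\theta$ a nonzero character on $\mathcal{A}$, and $\mathcal{X}$ a simple Banach $(\mathcal{A}\times_{\theta}\mathcal{U})$-bimodule. Let $D:\mathcal{A}\times_{\theta}\mathcal{U}\to\mathcal{X}$ be a derivation and $\delta_2(u)=D((0,u))$. Then either $\delta_2$ is continuous or $\mathcal{X}$ is a symmetric Banach $\mathcal{A}$-bimodule, i.e. $ax=xa$ for all $a\in\mathcal{A}$, $x\in\mathcal{X}$.
   Context: The Lau product $\mathcal{A}\times_{\theta}\mathcal{U}$ is $\mathcal{A}\times\mathcal{U}$ with norm $\|(a,u)\|=\|a\|+\|u\|$ and product $(a,u)(a',u')=(aa',\theta(a)u'+\theta(a')u+uu')$. $\mathcal{X}$ is an $\mathcal{A}$-bimodule via $ax=(a,0)x$, $xa=x(a,0)$ and a $\mathcal{U}$-bimodule via $ux=(0,u)x$, $xu=x(0,u)$. Simple means the only closed $(\mathcal{A}\times_{\theta}\mathcal{U})$-subbimodules of $\mathcal{X}$ are $\{0\}$ and $\mathcal{X}$. *)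

From HB Require Import structures.
From mathcomp Require Import all_boot all_order all_algebra.
From mathcomp Require Import all_classical all_reals topology normedtype.
From mathcomp Require Export complex.
Set Implicit Arguments. Unset Strict Implicit. Unset Printing Implicit Defensive.
Import Order.TTheory GRing.Theory Num.Theory.
Import numFieldNormedType.Exports.
Local Open Scope ring_scope.
Local Open Scope classical_set_scope.

Section Defs.
Variable K : numFieldType.

Definition banach_algebra (A : completeNormedModType K) (mul : A -> A -> A) :=
  [/\ (forall a b c, mul a (mul b c) = mul (mul a b) c),
      (forall a b c, mul a (b + c) = mul a b + mul a c)
      /\ (forall a b c, mul (a + b) c = mul a c + mul b c),
      (forall (k : K) a b, mul (k *: a) b = k *: mul a b),
      (forall (k : K) a b, mul a (k *: b) = k *: mul a b)
    & (forall a b, `|mul a b| <= `|a| * `|b|)].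

Definition nonzero_character (A : completeNormedModType K) (mul : A -> A -> A)
    (theta : A -> K) :=
  [/\ (forall a b, theta (a + b) = theta a + theta b),
      (forall (k : K) a, theta (k *: a) = k * theta a),
      (forall a b, theta (mul a b) = theta a * theta b)
    & exists a, theta a != 0].

Definition lau_mul (A U : completeNormedModType K) (mulA : A -> A -> A)
    (mulU : U -> U -> U) (theta : A -> K) (p q : A * U) : A * U :=
  (mulA p.1 q.1, theta p.1 *: q.2 + theta q.1 *: p.2 + mulU p.2 q.2).

Definition lau_norm (A U : completeNormedModType K) (p : A * U) : K :=
  `|p.1| + `|p.2|.

Definition padd (A U : completeNormedModType K) (p q : A * U) : A * U :=
  (p.1 + q.1, p.2 + q.2).
Definition pscale (A U : completeNormedModType K) (k : K) (p : A * U) : A * U :=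
  (k *: p.1, k *: p.2).

Definition banach_bimodule (B : Type) (addB : B -> B -> B) (scaleB : K -> B -> B)
    (mulB : B -> B -> B) (nrm : B -> K) (X : completeNormedModType K)
    (la : B -> X -> X) (ra : X -> B -> X) :=
  [/\ (forall p x y, la p (x + y) = la p x + la p y)
      /\ (forall (k : K) p x, la p (k *: x) = k *: la p x)
      /\ (forall p q x, la (addB p q) x = la p x + la q x)
      /\ (forall (k : K) p x, la (scaleB k p) x = k *: la p x),
      (forall p x y, ra (x + y) p = ra x p + ra y p)
      /\ (forall (k : K) p x, ra (k *: x) p = k *: ra x p)
      /\ (forall p q x, ra x (addB p q) = ra x p + ra x q)
      /\ (forall (k : K) p x, ra x (scaleB k p) = k *: ra x p),
      (forall p q x, la (mulB p q) x = la p (la q x))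
      /\ (forall p q x, ra x (mulB p q) = ra (ra x p) q)
      /\ (forall p q x, la p (ra x q) = ra (la p x) q)
    & exists C : K, forall p x,
        `|la p x| <= C * nrm p * `|x| /\ `|ra x p| <= C * nrm p * `|x|].

Definition closed_subbimodule (B : Type) (X : completeNormedModType K)
    (la : B -> X -> X) (ra : X -> B -> X) (S : set X) :=
  [/\ closed S, S 0,
      (forall x y, S x -> S y -> S (x + y)),
      (forall (k : K) x, S x -> S (k *: x))
    & (forall p x, S x -> S (la p x) /\ S (ra x p))].

Definition simple_bimodule (B : Type) (X : completeNormedModType K)
    (la : B -> X -> X) (ra : X -> B -> X) :=
  forall S : set X, closed_subbimodule la ra S -> S = [set 0] \/ S = setT.

Definition derivation (B : Type) (addB : B -> B -> B) (scaleB : K -> B -> B)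
    (mulB : B -> B -> B) (X : completeNormedModType K)
    (la : B -> X -> X) (ra : X -> B -> X) (D : B -> X) :=
  [/\ (forall p q, D (addB p q) = D p + D q),
      (forall (k : K) p, D (scaleB k p) = k *: D p)
    & (forall p q, D (mulB p q) = la p (D q) + ra (D p) q)].

End Defs.

From HB Require Import structures.
From mathcomp Require Import all_boot all_order all_algebra.
From mathcomp Require Import all_classical all_reals topology normedtype sequences.
From mathcomp Require Import complex.
From mathcomp Require Import ring lra.
Import Order.TTheory GRing.Theory Num.Theory.
Import numFieldNormedType.Exports.
Local Open Scope ring_scope.
Local Open Scope classical_set_scope.
Local Open Scope complex_scope.

(** Let T be the set of x in X with a x = theta(a) x = x a for every a in A.
    The bimodule laws and the multiplicativity of theta make T a closed
    sub-bimodule, so by simplicity either T = X, i.e. X is a symmetric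
    A-bimodule, or T = {0}.  Applying D to (a,0)(0,u) = (0, theta(a) u) and to
    (0,u)(a,0) = (0, theta(a) u) shows that whenever u_n -> u and
    delta2(u_n) -> x, the vector x - delta2(u) lies in T.  Hence if T = {0}
    the graph of delta2 is closed, and delta2 is continuous by the closed
    graph theorem, a consequence of Baire's theorem applied to the
    underlying real Banach spaces. *)

Lemma morphB_of_morphD {V W : zmodType} (g : V -> W) :
  {morph g : x y / x + y} -> {morph g : x y / x - y}.
Proof. by move=> gD x y; apply/eqP; rewrite eq_sym subr_eq -gD subrK. Qed.

Lemma bounded_morphB_continuous {K : numFieldType} {V W : normedModType K}
    (g : V -> W) (c : K) :
  {morph g : x y / x - y} -> (forall x, `|g x| <= c * `|x|) -> continuous g.
Proof.
move=> gB gc x; apply/cvgrPdist_lt => e e0.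
have gc' y : `|g y| <= (`|c| + 1) * `|y|.
  have cy0 : 0 <= c * `|y| := le_trans (normr_ge0 _) (gc y).
  apply: le_trans (gc y) _; apply: le_trans (real_ler_norm (ger0_real cy0)) _.
  by rewrite normrM normr_id ler_wpM2r // lerDl.
have c1 : 0 < `|c| + 1 by rewrite ltr_wpDl.
near=> y; rewrite -gB; apply: le_lt_trans (gc' _) _.
rewrite -ltr_pdivlMl //; near: y; apply: cvgr_dist_lt => //.
by rewrite mulrC divr_gt0.
Unshelve. all: by end_near. Qed.

Lemma closed_kernel {T : topologicalType} {K : numFieldType} {W : normedModType K}
    (g : T -> W) : continuous g -> closed [set x | g x = 0].
Proof.
move=> gc; apply: (@preimage_closed _ _ g [set 0]) => [x _ | ]; first exact: gc.
exact/accessible_closed_set1/hausdorff_accessible/norm_hausdorff.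
Qed.

(** * The closed graph theorem *)

Lemma closure_norm_approx {K : numFieldType} {V : normedModType K}
    (A : set V) x e :
  closure A x -> 0 < e -> exists2 y, A y & `|x - y| < e.
Proof.
move=> Ax e0; have [y [Ay xy]] := Ax _ (nbhsx_ballx x _ e0).
by exists y; move: xy; rewrite -ball_normE.
Qed.

Lemma Baire_sublevel_ball {R : realType} {V : completeNormedModType R}
    (g : V -> R) :
  exists n : nat, exists u : V, exists2 r : R, 0 < r &
    ball u r `<=` closure [set v | g v <= n%:R].
Proof.
pose A n := closure [set v | g v <= n%:R].
have [n /denseNE[O [[x /open_nbhs_nbhs /nbhs_ballP[r r0 xrO]] OA]]] :
    exists n, ~ dense (~` A n).
  apply/existsNP => denseA.
  have [||x [_ xA]] := Baire
    (fun n => conj (closed_openC (@closed_closure _ _)) (denseA n)) (O := setT).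
  - by exists 0.
  - exact: openT.
  apply: (xA (Num.truncn (g x)).+1 Logic.I); apply: subset_closure.
  exact/ltW/truncnS_gt.
exists n, x, r => // y /xrO Oy.
by move/disjoints_subset: OA => /(_ y Oy); rewrite setCK.
Qed.

Section linear_from_Banach.
Context {R : realType} {V : completeNormedModType R} {W : normedModType R}.
Variable f : {linear V -> W}.

(* Baire gives a ball on which f is nearly bounded; translating and scaling
   that ball covers every vector. *)
Lemma linear_nearly_bounded : exists2 M : R, 0 <= M &
  forall v, exists w, `|v - w| <= `|v| / 2 /\ `|f w| <= M * `|v|.
Proof.
have [n [u [r r0 ball_sub]]] := Baire_sublevel_ball (fun v => `|f v|).
have approx x e : ball u r x -> 0 < e -> exists2 w, `|f w| <= n%:R & `|x - w| < e.
  by move=> /ball_sub; exact: closure_norm_approx.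
exists (4 * n%:R / r); first by apply: divr_ge0 (ltW r0); apply: mulr_ge0.
move=> v; have [->|v0] := eqVneq v 0.
  by exists 0; rewrite subr0 linear0 !normr0 mulr0 mul0r.
have nv0 : 0 < `|v| by rewrite normr_gt0.
pose s := r / (2 * `|v|).
have s0 : 0 < s by rewrite divr_gt0 // mulr_gt0.
have svE : s * `|v| = r / 2 by rewrite /s; field; rewrite gt_eqF.
have [w1 fw1 w1v] : exists2 w1, `|f w1| <= n%:R & `|u + s *: v - w1| < r / 8.
  apply: approx; last by rewrite divr_gt0.
  rewrite -ball_normE /= opprD addrA subrr add0r normrN normrZ gtr0_norm // svE.
  lra.
have [w2 fw2 w2u] : exists2 w2, `|f w2| <= n%:R & `|u - w2| < r / 8.
  by apply: approx; [exact: ballxx | rewrite divr_gt0].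
have sinv : s^-1 = 2 * `|v| / r by rewrite /s invf_div.
have shift : (u + s *: v - w1) - (u - w2) = s *: v - (w1 - w2).
  by rewrite [u + _]addrC addrAC addrKA opprB opprK addrA addrAC.
exists (s^-1 *: (w1 - w2)); split.
- have -> : v - s^-1 *: (w1 - w2) = s^-1 *: ((u + s *: v - w1) - (u - w2)).
    by rewrite shift [RHS]scalerBr scalerA mulVf ?gt_eqF // scale1r.
  rewrite normrZ gtr0_norm ?invr_gt0 // sinv.
  have := ler_normB (u + s *: v - w1) (u - w2).
  set a := `|_ - (u - w2)| => a_le.
  rewrite mulrAC ler_pdivrMr //; nra.
- rewrite linearZ linearB normrZ gtr0_norm ?invr_gt0 // sinv.
  have := ler_normB (f w1) (f w2).
  set a := `|f w1 - f w2| => a_le.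
  have -> : 4 * n%:R / r * `|v| = 2 * `|v| / r * (2 * n%:R) by ring.
  by apply: ler_wpM2l; [apply: divr_ge0 | ]; lra.
Qed.

(* Iterating [linear_nearly_bounded] on the residuals r_n = v - s_n writes v
   as the limit of partial sums whose images have geometrically decreasing
   increments. *)
Lemma linear_series_approx : exists2 M : R, 0 <= M & forall v,
  exists s : V ^nat, exists d : W ^nat, s n @[n --> \oo] --> v /\
    (forall n, f (s n) = series d n) /\
    (forall n, `|d n| <= geometric (M * `|v|) 2^-1 n).
Proof.
have [M M0 /choice[g gP]] := linear_nearly_bounded.
exists M => // v.
pose r n := iter n (fun x => x - g x) v.
have r_le n : `|r n| <= geometric `|v| 2^-1 n.
  elim: n => [|n IHn] /=; first by rewrite expr0 mulr1.
  have [gr _] := gP (r n); rewrite exprSr mulrA.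
  by apply: le_trans gr _; rewrite ler_pM2r ?invr_gt0.
exists (fun n => v - r n), (fun n => f (g (r n))); split; last split.
- rewrite -{2}(subr0 v); apply: cvgB => //; first exact: cvg_cst.
  apply: norm_cvg0; apply: (@squeeze_cvgr _ _ _ _ (cst 0) (geometric `|v| 2^-1)).
  + by apply: nearW => n; rewrite normr_ge0 r_le.
  + exact: cvg_cst.
  + by apply: cvg_geometric; rewrite ger0_norm ?invr_ge0 // invf_lt1 // ltr1n.
- elim=> [|n IHn]; first by rewrite seriesEord /= big_ord0 subrr linear0.
  by rewrite seriesSr -IHn -linearD /= opprB addrA addrAC.
- move=> n; have [_ fg] := gP (r n); rewrite /= -mulrA.
  exact: le_trans fg (ler_wpM2l M0 (r_le n)).
Qed.

End linear_from_Banach.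

Section closed_graph.
Context {R : realType} {V W : completeNormedModType R}.
Variable f : {linear V -> W}.
Hypothesis graph_closed : closed [set p : V * W | f p.1 = p.2].

Lemma closed_graph_bounded : exists K : R, forall v, `|f v| <= K * `|v|.
Proof.
have [M M0 approx] := linear_series_approx f.
exists (2 * M) => v; have [s [d [s_v [fs d_le]]]] := approx v.
have half_lt1 : `|2^-1 : R| < 1.
  by rewrite ger0_norm ?invr_ge0 // invf_lt1 // ltr1n.
have d_cvg : cvgn [normed series d].
  apply: (@series_le_cvg _ (fun n => `|d n|) _ _ _ d_le) => [//| n |].
    by rewrite geometric_ge0 ?mulr_ge0 ?invr_ge0.
  exact: is_cvg_geometric_series.
have -> : f v = limn (series d).
  have graph_cvg : (s n, series d n) @[n --> \oo] --> (v, limn (series d)).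
    by apply: cvg_pair => //=; exact: normed_cvg.
  apply: (closed_cvg _ graph_closed _ _ graph_cvg).
  by apply: nearW => n /=; rewrite fs.
apply: (le_trans (lim_series_norm d_cvg)).
apply: (le_trans (@lim_series_le _ (fun n => `|d n|) _ d_cvg
  (is_cvg_geometric_series half_lt1) d_le)).
rewrite (cvg_lim _ (cvg_geometric_series half_lt1)) //.
have -> : M * `|v| / (1 - 2^-1) = 2 * M * `|v| by field.
exact: lexx.
Qed.

Lemma closed_graph_continuous : continuous f.
Proof.
have [K fK] := closed_graph_bounded.
apply/bounded_linear_continuous/linear_boundedP; near=> k => x.
apply: le_trans (fK x) _; apply: ler_wpM2r => //; near: k.
by apply: nbhs_pinfty_ge; exact: num_real.
Unshelve. all: by end_near. Qed.

End closed_graph.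

(** * Complex Banach spaces as real ones *)

Lemma normc_real {R : realType} {V : normedModType R[i]} (v : V) :
  `|v| = (complex.Re `|v|)%:C.
Proof. by rewrite RRe_real // ger0_real. Qed.

Lemma normcR {R : rcfType} (k : R) : `|k%:C| = `|k|%:C.
Proof. by rewrite normc_def /= expr0n /= addr0 sqrtr_sqr. Qed.

Lemma posc_real {R : rcfType} (e : R[i]) :
  0 < e -> e = (complex.Re e)%:C /\ 0 < complex.Re e.
Proof.
by move=> e0; rewrite RRe_real ?gtr0_real //; move: e0; rewrite ltcE => /andP[].
Qed.

Section realified.
Context {R : realType} (V : completeNormedModType R[i]).

(* [Baire] is stated for normed spaces over a realType, hence this copy of V
   with scalars restricted to R and norm the real part of the norm of V. *)
Definition realified : Type := V.

HB.instance Definition _ := GRing.Zmodule.copy realified V.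

Let rscale (k : R) (v : realified) : realified := k%:C *: (v : V).

Let rscaleA a b v : rscale a (rscale b v) = rscale (a * b) v.
Proof. by rewrite /rscale scalerA rmorphM. Qed.

Let rscale1 : left_id 1 rscale.
Proof. by move=> v; rewrite /rscale scale1r. Qed.

Let rscaleDr : right_distributive rscale +%R.
Proof. by move=> k u v; rewrite /rscale scalerDr. Qed.

Let rscaleDl v : {morph rscale^~ v : a b / a + b}.
Proof. by move=> a b; rewrite /rscale rmorphD scalerDl. Qed.

HB.instance Definition _ := GRing.Zmodule_isLmodule.Build R realified
  rscaleA rscale1 rscaleDr rscaleDl.

Let rnorm (v : realified) : R := complex.Re `|v : V|.

Let rnormD u v : rnorm (u + v) <= rnorm u + rnorm v.
Proof.
have := ler_normD (u : V) v; rewrite lecE => /andP[_].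
by rewrite /rnorm; case: `|u : V| => a b; case: `|v : V|.
Qed.

Let rnormZ (k : R) v : rnorm (k *: v) = `|k| * rnorm v.
Proof.
rewrite /rnorm (_ : `|(k *: v : realified) : V| = `|k%:C *: (v : V)|) //.
by rewrite normrZ normcR; case: `|v : V| => a b /=; rewrite mul0r subr0.
Qed.

Let rnorm_eq0 v : rnorm v = 0 -> v = 0.
Proof. by move=> v0; apply/normr0_eq0; rewrite normc_real; congr (_%:C). Qed.

HB.instance Definition _ :=
  Lmodule_isNormed.Build R realified rnormD rnormZ rnorm_eq0.

Lemma realified_ball (x : realified) (r : R) : ball x r = ball (x : V) r%:C.
Proof.
rewrite -!ball_normE /ball_ /= funeqE => y.
by rewrite /= -ltcR -normc_real.
Qed.

Lemma realified_nbhs (x : realified) : nbhs x = nbhs (x : V).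
Proof.
rewrite funeqE => P; rewrite propeqE !nbhs_ballP; split => -[e e0 eP].
  by exists e%:C; rewrite /= ?ltcR // -realified_ball.
have [e_real e0'] := posc_real _ e0.
by exists (complex.Re e) => //; rewrite realified_ball -e_real.
Qed.

Let realified_cauchy_cvg (F : set_system realified) :
  ProperFilter F -> cauchy F -> cvg F.
Proof.
move=> FF /cauchy_ballP FC.
have /cauchy_cvg : cauchy (F : set_system V).
  apply/cauchy_ballP => e /posc_real[e_real e0]; rewrite e_real.
  by apply: filterS (FC _ e0) => -[a b]; rewrite /= realified_ball.
move=> /cvg_ex[l Fl]; apply/cvg_ex; exists l.
by move=> P; rewrite realified_nbhs; exact: Fl.
Qed.

HB.instance Definition _ :=
  Uniform_isComplete.Build realified realified_cauchy_cvg.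

End realified.

Lemma realified_prod_nbhs {R : realType} {V W : completeNormedModType R[i]}
    (p : realified V * realified W) : nbhs p = nbhs (p : V * W).
Proof. by rewrite /nbhs /= !realified_nbhs. Qed.

Lemma closed_graph_continuous_complex {R : realType}
    {V W : completeNormedModType R[i]} (f : V -> W) :
  linear f -> closed [set p : V * W | f p.1 = p.2] -> continuous f.
Proof.
move=> f_lin f_closed.
have fR_lin : linear (f : realified V -> realified W).
  by move=> a u v; exact: f_lin.
pose fR : {linear realified V -> realified W} :=
  HB.pack (f : realified V -> realified W) (GRing.isLinear.Build _ _ _ _ _ fR_lin).
have fR_closed : closed [set p : realified V * realified W | fR p.1 = p.2].
  move=> p p_cl; apply: f_closed => B; rewrite -realified_prod_nbhs; exact: p_cl.
move=> x P; rewrite -realified_nbhs => /(closed_graph_continuous _ fR_closed).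
by rewrite /= realified_nbhs.
Qed.

(** * Derivations into simple bimodules over a Lau product *)

Lemma banach_algebra_mul0l {K : numFieldType} {A : completeNormedModType K}
  (mul : A -> A -> A) : banach_algebra mul -> forall b, mul 0 b = 0.
Proof.
by case=> _ [_ mulDl] _ _ _ b; apply: (@addrI _ (mul 0 b)); rewrite -mulDl !addr0.
Qed.

Lemma banach_algebra_mul0r {K : numFieldType} {A : completeNormedModType K}
  (mul : A -> A -> A) : banach_algebra mul -> forall b, mul b 0 = 0.
Proof.
by case=> _ [mulDr _] _ _ _ b; apply: (@addrI _ (mul b 0)); rewrite -mulDr !addr0.
Qed.

Lemma pscale_embedU {K : numFieldType} {A U : completeNormedModType K}
  (k : K) (v : U) : pscale k (0 : A, v) = (0, k *: v).
Proof. by rewrite /pscale /= scaler0. Qed.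

Lemma padd_embedU {K : numFieldType} {A U : completeNormedModType K} (u v : U) :
  padd (0 : A, u) (0, v) = (0, u + v).
Proof. by rewrite /padd /= addr0. Qed.

Lemma padd_split {K : numFieldType} {A U : completeNormedModType K}
  (b : A) (v : U) : padd (b, 0) (0, v) = (b, v).
Proof. by rewrite /padd /= addr0 add0r. Qed.

Section lau_product_derivation.
Context {R : realType} {A U X : completeNormedModType R[i]}.
Context {mulA : A -> A -> A} {mulU : U -> U -> U} {theta : A -> R[i]}.
Context {la : A * U -> X -> X} {ra : X -> A * U -> X} {D : A * U -> X}.
Hypothesis mulA_alg : banach_algebra mulA.
Hypothesis mulU_alg : banach_algebra mulU.
Hypothesis theta_char : nonzero_character mulA theta.
Hypothesis bimod : banach_bimodule (@padd _ A U) (@pscale _ A U)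
  (lau_mul mulA mulU theta) (@lau_norm _ A U) la ra.
Hypothesis der : derivation (@padd _ A U) (@pscale _ A U)
  (lau_mul mulA mulU theta) la ra D.

Local Notation lau := (lau_mul mulA mulU theta).

Lemma lau_mul_embedL a b v : lau (a, 0) (b, v) = (mulA a b, theta a *: v).
Proof. by rewrite /lau_mul /= banach_algebra_mul0l // scaler0 !addr0. Qed.

Lemma lau_mul_embedR a b v : lau (b, v) (a, 0) = (mulA b a, theta a *: v).
Proof. by rewrite /lau_mul /= banach_algebra_mul0r // scaler0 add0r addr0. Qed.

Let laD p : {morph la p : x y / x + y}.
Proof. by case: bimod => [[laD _] _ _ _]; exact: laD. Qed.
Let laZ p (k : R[i]) x : la p (k *: x) = k *: la p x.
Proof. by case: bimod => [[_ [laZ _]] _ _ _]; exact: laZ. Qed.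
Let laDp p q x : la (padd p q) x = la p x + la q x.
Proof. by case: bimod => [[_ [_ [laDp _]]] _ _ _]; exact: laDp. Qed.
Let laZp (k : R[i]) p x : la (pscale k p) x = k *: la p x.
Proof. by case: bimod => [[_ [_ [_ laZp]]] _ _ _]; exact: laZp. Qed.
Let raD p : {morph ra^~ p : x y / x + y}.
Proof. by case: bimod => [_ [raD _] _ _]; exact: raD. Qed.
Let raZ p (k : R[i]) x : ra (k *: x) p = k *: ra x p.
Proof. by case: bimod => [_ [_ [raZ _]] _ _]; exact: raZ. Qed.
Let raDp p q x : ra x (padd p q) = ra x p + ra x q.
Proof. by case: bimod => [_ [_ [_ [raDp _]]] _ _]; exact: raDp. Qed.
Let raZp (k : R[i]) p x : ra x (pscale k p) = k *: ra x p.
Proof. by case: bimod => [_ [_ [_ [_ raZp]]] _ _]; exact: raZp. Qed.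
Let laM p q x : la (lau p q) x = la p (la q x).
Proof. by case: bimod => [_ _ [laM _] _]; exact: laM. Qed.
Let raM p q x : ra x (lau p q) = ra (ra x p) q.
Proof. by case: bimod => [_ _ [_ [raM _]] _]; exact: raM. Qed.
Let la_ra p q x : la p (ra x q) = ra (la p x) q.
Proof. by case: bimod => [_ _ [_ [_ la_ra]] _]; exact: la_ra. Qed.

Let bimod_bound : exists C : R[i], forall p x,
  `|la p x| <= C * lau_norm p * `|x| /\ `|ra x p| <= C * lau_norm p * `|x|.
Proof. by case: bimod. Qed.

Let la0 p : la p 0 = 0.
Proof. by apply: (@addrI _ (la p 0)); rewrite -laD !addr0. Qed.
Let ra0 p : ra 0 p = 0.
Proof. by apply: (@addrI _ (ra 0 p)); rewrite -raD !addr0. Qed.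

Lemma la_split b v x : la (b, v) x = la (b, 0) x + la (0, v) x.
Proof. by rewrite -laDp padd_split. Qed.

Lemma ra_split b v x : ra x (b, v) = ra x (b, 0) + ra x (0, v).
Proof. by rewrite -raDp padd_split. Qed.

Lemma la_continuous p : continuous (la p).
Proof.
have [C HC] := bimod_bound.
apply: (@bounded_morphB_continuous _ _ _ _ (C * lau_norm p)).
  exact: morphB_of_morphD.
by move=> x; have [] := HC p x.
Qed.

Lemma ra_continuous p : continuous (ra^~ p).
Proof.
have [C HC] := bimod_bound.
apply: (@bounded_morphB_continuous _ _ _ _ (C * lau_norm p)).
  exact: morphB_of_morphD.
by move=> x; have [] := HC p x.
Qed.

Lemma la_embedU_continuous x : continuous (fun v : U => la (0, v) x).
Proof.
have [C HC] := bimod_bound.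
apply: (@bounded_morphB_continuous _ _ _ _ (C * `|x|)).
  by apply: morphB_of_morphD => u v /=; rewrite -laDp padd_embedU.
move=> v; have [+ _] := HC (0, v) x.
by rewrite /lau_norm normr0 add0r mulrAC.
Qed.

Lemma ra_embedU_continuous x : continuous (fun v : U => ra x (0, v)).
Proof.
have [C HC] := bimod_bound.
apply: (@bounded_morphB_continuous _ _ _ _ (C * `|x|)).
  by apply: morphB_of_morphD => u v /=; rewrite -raDp padd_embedU.
move=> v; have [_] := HC (0, v) x.
by rewrite /lau_norm normr0 add0r mulrAC.
Qed.

Let thetaM a b : theta (mulA a b) = theta a * theta b.
Proof. by case: theta_char. Qed.

Definition theta_eigenspace : set X :=
  [set x | forall a, la (a, 0) x = theta a *: x /\ ra x (a, 0) = theta a *: x].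

Definition left_defect a x := la (a, 0) x - theta a *: x.
Definition right_defect a x := ra x (a, 0) - theta a *: x.

Lemma left_defectB a : {morph left_defect a : x y / x - y}.
Proof.
by apply: morphB_of_morphD => x y; rewrite /left_defect laD scalerDr opprD addrACA.
Qed.

Lemma right_defectB a : {morph right_defect a : x y / x - y}.
Proof.
by apply: morphB_of_morphD => x y; rewrite /right_defect raD scalerDr opprD addrACA.
Qed.

Lemma left_defect_continuous a : continuous (left_defect a).
Proof. by move=> x; apply: cvgB; [exact: la_continuous | exact: scaler_continuous]. Qed.

Lemma right_defect_continuous a : continuous (right_defect a).
Proof. by move=> x; apply: cvgB; [exact: ra_continuous | exact: scaler_continuous]. Qed.

Lemma theta_eigenspaceE : theta_eigenspace =
  \bigcap_a ([set x | left_defect a x = 0] `&` [set x | right_defect a x = 0]).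
Proof.
apply/seteqP; split => x /= Tx a.
- by move=> _; split; rewrite /= /left_defect /right_defect ?(Tx a).1 ?(Tx a).2 subrr.
- by have [/subr0_eq -> /subr0_eq ->] := Tx a Logic.I.
Qed.

Lemma theta_eigenspace_subbimodule : closed_subbimodule la ra theta_eigenspace.
Proof.
split.
- rewrite theta_eigenspaceE; apply: closed_bigI => a _.
  apply: closedI; apply: closed_kernel.
  - exact: left_defect_continuous.
  - exact: right_defect_continuous.
- by move=> a; rewrite la0 ra0 scaler0.
- move=> x y Tx Ty a; have [lx rx] := Tx a; have [ly ry] := Ty a.
  by rewrite laD raD lx rx ly ry !scalerDr.
- move=> k x Tx a; have [lx rx] := Tx a.
  by rewrite laZ raZ lx rx !scalerA mulrC.
move=> [b v] x Tx; split=> a; split.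
- rewrite -laM lau_mul_embedL [la (b, v) x]la_split [la (mulA a b, _) x]la_split.
  rewrite -pscale_embedU laZp (Tx (mulA a b)).1 (Tx b).1 thetaM.
  by rewrite scalerDr scalerA.
- by rewrite -la_ra (Tx a).2 laZ.
- by rewrite la_ra (Tx a).1 raZ.
- rewrite -raM lau_mul_embedR [ra x (b, v)]ra_split [ra x (mulA b a, _)]ra_split.
  rewrite -pscale_embedU raZp (Tx (mulA b a)).2 (Tx b).2 thetaM.
  by rewrite mulrC scalerDr scalerA.
Qed.

Let DD p q : D (padd p q) = D p + D q. Proof. by case: der. Qed.
Let DZ (k : R[i]) p : D (pscale k p) = k *: D p. Proof. by case: der. Qed.
Let DM p q : D (lau p q) = la p (D q) + ra (D p) q. Proof. by case: der. Qed.

Lemma derivation_embedU_linear : linear (fun v : U => D (0, v)).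
Proof. by move=> k u v; rewrite /= -padd_embedU -pscale_embedU DD DZ. Qed.

Lemma left_defect_derivation a v :
  left_defect a (D (0, v)) = - ra (D (a, 0)) (0, v).
Proof.
have := DM (a, 0) (0, v).
rewrite lau_mul_embedL banach_algebra_mul0r // -pscale_embedU DZ /left_defect => ->.
by rewrite opprD addrA subrr add0r.
Qed.

Lemma right_defect_derivation a v :
  right_defect a (D (0, v)) = - la (0, v) (D (a, 0)).
Proof.
have := DM (0, v) (a, 0).
rewrite lau_mul_embedR banach_algebra_mul0l // -pscale_embedU DZ /right_defect => ->.
by rewrite opprD addrCA subrr addr0.
Qed.

Lemma derivation_embedU_graph_closed :
  theta_eigenspace = [set 0] -> closed [set p : U * X | D (0, p.1) = p.2].
Proof.
move=> T0.
have snd_cont (g : X -> X) : continuous g -> continuous (fun p : U * X => g p.2).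
  by move=> gc p; apply: (continuous_comp _ (gc p.2)); exact: cvg_snd.
have fst_cont (g : U -> X) : continuous g -> continuous (fun p : U * X => g p.1).
  by move=> gc p; apply: (continuous_comp _ (gc p.1)); exact: cvg_fst.
rewrite (_ : [set p | _] = \bigcap_a
  ([set p : U * X | left_defect a p.2 + ra (D (a, 0)) (0, p.1) = 0] `&`
   [set p | right_defect a p.2 + la (0, p.1) (D (a, 0)) = 0])).
  apply: closed_bigI => a _; apply: closedI; apply: closed_kernel => p; apply: cvgD.
  - exact: (snd_cont _ (left_defect_continuous _)).
  - exact: (fst_cont _ (ra_embedU_continuous _)).
  - exact: (snd_cont _ (right_defect_continuous _)).
  - exact: (fst_cont _ (la_embedU_continuous _)).
apply/seteqP; split => [[v y] /= <- a _ | [v y] graph_eq].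
  by split => /=; rewrite ?left_defect_derivation ?right_defect_derivation addNr.
suff : theta_eigenspace (y - D (0, v)) by rewrite T0 => /subr0_eq ->.
rewrite theta_eigenspaceE => a _; have [Ga Ga'] := graph_eq a Logic.I.
split => /=.
- by rewrite left_defectB left_defect_derivation opprK.
- by rewrite right_defectB right_defect_derivation opprK.
Qed.

Lemma theta_eigenspace_full_symmetric :
  theta_eigenspace = setT -> forall a x, la (a, 0) x = ra x (a, 0).
Proof. by move=> T1 a x; have /(_ a)[-> ->] : theta_eigenspace x by rewrite T1. Qed.

End lau_product_derivation.

Theorem theorem2p9 (R : realType) (A U X : completeNormedModType R[i])
  (mulA : A -> A -> A) (mulU : U -> U -> U) (theta : A -> R[i])
  (la : A * U -> X -> X) (ra : X -> A * U -> X) (D : A * U -> X) :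
  banach_algebra mulA -> banach_algebra mulU ->
  nonzero_character mulA theta ->
  banach_bimodule (@padd _ A U) (@pscale _ A U) (lau_mul mulA mulU theta)
    (@lau_norm _ A U) la ra ->
  simple_bimodule la ra ->
  derivation (@padd _ A U) (@pscale _ A U) (lau_mul mulA mulU theta) la ra D ->
  continuous (fun u : U => D (0, u)) \/
  (forall (a : A) (x : X), la (a, 0) x = ra x (a, 0)).
Proof.
move=> mulA_alg mulU_alg theta_char bimod simple der.
have [T0|T1] := simple _ (theta_eigenspace_subbimodule mulU_alg theta_char bimod).
  left; apply: closed_graph_continuous_complex; first exact: derivation_embedU_linear der.
  exact: derivation_embedU_graph_closed mulA_alg mulU_alg bimod der T0.
by right; exact: theta_eigenspace_full_symmetric T1.
Qed.
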